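(* Let $p,q\in\mathbb{N}$, $\alpha_1,\dots,\alpha_p,\beta_1,\dots,\beta_q\in\mathbb{R}$, $A_1,\dots,A_p,B_1,\dots,B_q>0$, with $\sum_{k=1}^q\beta_k-\sum_{j=1}^p\alpha_j+\frac{p-q}{2}>0$ and $\sum_{j=1}^pA_j=\sum_{k=1}^qB_k$, and with $\psi_{n,m}=\frac{\prod_{i=1}^p\Gamma(\alpha_i+(n+m)A_i)}{\prod_{j=1}^q\Gamma(\beta_j+(n+m)B_j)}$ satisfying $\psi_{n,2}<\psi_{n,1}$ and $\psi_{n,1}^2<\psi_{n,0}\psi_{n,2}$ for all $n\in\mathbb{N}_0$. For $\sigma>0$ and $z\in(0,1)$ let $\Xi(\sigma)=\Xi_z(\sigma)={}_{p+1}\Psi_q\Big[_{(\beta_1,B_1),\dots,(\beta_q,B_q)}^{(\sigma,1),(\alpha_1,A_1),\dots,(\alpha_p,A_p)}\Big|z\Big]$. Then for each $z\in(0,1)$ the function $\sigma\mapsto\Xi(\sigma)$ is log-convex on $(0,\infty)$, and $$\Xi(\sigma)\,\Xi(\sigma+2)-\Xi(\sigma+1)^2\ge0$$ for all $\sigma\in(0,\infty)$ and $z\in(0,1)$.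
   Context: The Fox-Wright function with parameters $(a_i,C_i)_{i=1}^{r}$ upstairs and $(b_j,D_j)_{j=1}^s$ downstairs ($C_i,D_j>0$) is ${}_r\Psi_s\Big[_{(b_1,D_1),\dots,(b_s,D_s)}^{(a_1,C_1),\dots,(a_r,C_r)}\Big|z\Big]=\sum_{k=0}^\infty\frac{\prod_{i=1}^r\Gamma(a_i+kC_i)}{\prod_{j=1}^s\Gamma(b_j+kD_j)}\frac{z^k}{k!}$. *)

From Stdlib Require Import Reals List Factorial.
From Coquelicot Require Import Coquelicot.
Import ListNotations.
Open Scope R_scope.

Definition prodR (n : nat) (f : nat -> R) : R :=
  fold_right Rmult 1 (map f (seq 0 n)).
Definition sumR (n : nat) (f : nat -> R) : R :=
  fold_right Rplus 0 (map f (seq 0 n)).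

(* Euler's Gamma function on the reals, via the Gauss product formula
   Gamma(x) = lim_n n! n^x / (x (x+1) ... (x+n)).
   (At the poles x = 0,-1,-2,... the sequence is eventually
   (stuff)/0 and this total definition returns a junk value.) *)
Definition Gamma (x : R) : R :=
  real (Lim_seq (fun n : nat =>
    INR (fact n) * Rpower (INR n) x / prodR (S n) (fun k => x + INR k))).

Definition FoxWright (r s : nat) (a C : nat -> R) (b D : nat -> R) (z : R) : R :=
  Series (fun k : nat =>
    prodR r (fun i => Gamma (a i + INR k * C i))
    / prodR s (fun j => Gamma (b j + INR k * D j))
    * z ^ k / INR (fact k)).

(* Upper parameters ((sigma,1),(alpha_1,A_1),...,(alpha_p,A_p)) as functions
   on indices 0..p. *)
Definition shift_param (first : R) (rest : nat -> R) (i : nat) : R :=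
  match i with O => first | S i' => rest i' end.

Definition log_convex_on (I : R -> Prop) (f : R -> R) : Prop :=
  (forall x, I x -> 0 < f x) /\
  (forall x y t, I x -> I y -> 0 <= t <= 1 ->
     ln (f (t * x + (1 - t) * y)) <= t * ln (f x) + (1 - t) * ln (f y)).

From Stdlib Require Import Reals List Lra Lia Factorial FunctionalExtensionality.
From Coquelicot Require Import Coquelicot.
Open Scope R_scope.

(** Writing c_k = ψ_{k,0} z^k / k!, the function Ξ(σ) is the series Σ_k c_k Γ(σ + k).  Each term
    is log-convex in σ because Γ is, and a convergent sum of positive log-convex functions is
    log-convex by Hölder's inequality; the Turán inequality is the midpoint case.  Γ is the limit
    of Gauss's products, whose logarithms are increasing in n, bounded, and convex in x (minus a
    sum of logarithms); Γ(x+1) = xΓ(x) then gives convergence by the ratio test.  The hypotheses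
    make the coefficients positive (ψ_{k,0} > 0 for large k, and ψ_{k+1,0}^2 < ψ_{k,0} ψ_{k+2,0}
    carries positivity down) and bounded (they decrease from k = 1 on). *)

Lemma prodR_S n f : prodR (S n) f = prodR n f * f n.
Proof.
  unfold prodR; rewrite seq_S, map_app, fold_right_app; simpl.
  rewrite Rmult_1_r; generalize (f n).
  induction (map f (seq 0 n)) as [|a l IH]; intros r; simpl; [ring|].
  rewrite IH; ring.
Qed.

Lemma sumR_S n f : sumR (S n) f = sumR n f + f n.
Proof.
  unfold sumR; rewrite seq_S, map_app, fold_right_app; simpl.
  rewrite Rplus_0_r; generalize (f n).
  induction (map f (seq 0 n)) as [|a l IH]; intros r; simpl; [ring|].
  rewrite IH; ring.
Qed.

Lemma prodR_shift n f : prodR (S n) f = f 0%nat * prodR n (fun k => f (S k)).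
Proof. unfold prodR; simpl; f_equal; now rewrite <- seq_shift, map_map. Qed.

Lemma sumR_shift n f : sumR (S n) f = f 0%nat + sumR n (fun k => f (S k)).
Proof. unfold sumR; simpl; f_equal; now rewrite <- seq_shift, map_map. Qed.

Lemma sumR_ext n f g : (forall k, (k < n)%nat -> f k = g k) -> sumR n f = sumR n g.
Proof. induction n; intros H; [reflexivity|]. rewrite !sumR_S, IHn, H; auto. Qed.

Lemma sumR_le n f g : (forall k, (k < n)%nat -> f k <= g k) -> sumR n f <= sumR n g.
Proof.
  induction n; intros H; [apply Rle_refl|].
  rewrite !sumR_S; apply Rplus_le_compat; auto.
Qed.

Lemma sumR_convex_comb n t f g :
  sumR n (fun k => t * f k + (1 - t) * g k) = t * sumR n f + (1 - t) * sumR n g.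
Proof. induction n; [unfold sumR; simpl; ring|]. rewrite !sumR_S, IHn; ring. Qed.

Lemma prodR_pos n f : (forall k, (k < n)%nat -> 0 < f k) -> 0 < prodR n f.
Proof.
  induction n; intros H; [apply Rlt_0_1|].
  rewrite prodR_S; apply Rmult_lt_0_compat; auto.
Qed.

Lemma ln_prodR n f : (forall k, (k < n)%nat -> 0 < f k) ->
  ln (prodR n f) = sumR n (fun k => ln (f k)).
Proof.
  induction n; intros H; [apply ln_1|].
  rewrite prodR_S, sumR_S, ln_mult, IHn; auto. apply prodR_pos; auto.
Qed.

Lemma INR_fact_pos n : 0 < INR (fact n).
Proof. apply lt_0_INR, lt_O_fact. Qed.

Lemma convex_comb_pos t x y : 0 < x -> 0 < y -> 0 <= t <= 1 -> 0 < t * x + (1 - t) * y.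
Proof. intros Hx Hy Ht; destruct (Req_dec t 0); [subst; lra | nra]. Qed.

Lemma exp_le_exp x y : x <= y -> exp x <= exp y.
Proof. intros [Hlt|<-]; [now left; apply exp_increasing | apply Rle_refl]. Qed.

(* Tangent line of exp at the convex combination m. *)
Lemma exp_convex t a b : 0 <= t <= 1 ->
  exp (t * a + (1 - t) * b) <= t * exp a + (1 - t) * exp b.
Proof.
  intros Ht; set (m := t * a + (1 - t) * b).
  assert (Ea : exp a = exp m * exp (a - m)) by (rewrite <- exp_plus; f_equal; ring).
  assert (Eb : exp b = exp m * exp (b - m)) by (rewrite <- exp_plus; f_equal; ring).
  pose proof (exp_ineq1_le (a - m)); pose proof (exp_ineq1_le (b - m)).
  pose proof (exp_pos m).
  rewrite Ea, Eb.
  assert (tangent : t * (exp m * (1 + (a - m))) + (1 - t) * (exp m * (1 + (b - m))) = exp m)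
    by (unfold m; ring).
  rewrite <- tangent at 1.
  apply Rplus_le_compat; apply Rmult_le_compat_l; try lra;
    apply Rmult_le_compat_l; lra.
Qed.

Lemma ln_concave t u v : 0 <= t <= 1 -> 0 < u -> 0 < v ->
  t * ln u + (1 - t) * ln v <= ln (t * u + (1 - t) * v).
Proof.
  intros Ht Hu Hv.
  rewrite <- (ln_exp (t * ln u + (1 - t) * ln v)).
  apply ln_le; [apply exp_pos|].
  rewrite <- (exp_ln u Hu), <- (exp_ln v Hv) at 2.
  now apply exp_convex.
Qed.

Lemma geom_mean_le_scaled t a b a' b' : 0 <= t <= 1 ->
  0 < a -> 0 < b -> 0 < a' -> 0 < b' ->
  exp (t * ln a + (1 - t) * ln b) <=
  exp (t * ln a' + (1 - t) * ln b') * (t * (a / a') + (1 - t) * (b / b')).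
Proof.
  intros Ht Ha Hb Ha' Hb'.
  replace (t * ln a + (1 - t) * ln b) with
    ((t * ln a' + (1 - t) * ln b') + (t * ln (a / a') + (1 - t) * ln (b / b')))
    by (rewrite !ln_div by assumption; ring).
  rewrite exp_plus; apply Rmult_le_compat_l; [apply Rlt_le, exp_pos|].
  rewrite <- (exp_ln (a / a')), <- (exp_ln (b / b')) at 2 by (apply Rdiv_lt_0_compat; assumption).
  now apply exp_convex.
Qed.

Lemma ln_sub_bounds u v : 0 < u -> 0 < v -> 1 - u / v <= ln v - ln u <= v / u - 1.
Proof.
  intros Hu Hv.
  assert (ln_le_pred : forall y, 0 < y -> ln y <= y - 1).
  { intros y Hy; pose proof (exp_ineq1_le (ln y)); rewrite exp_ln in *; lra. }
  pose proof (ln_le_pred (u / v) ltac:(apply Rdiv_lt_0_compat; lra)).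
  pose proof (ln_le_pred (v / u) ltac:(apply Rdiv_lt_0_compat; lra)).
  rewrite ln_div in * by lra; lra.
Qed.

Definition gauss_seq (n : nat) (x : R) : R :=
  INR (fact n) * Rpower (INR n) x / prodR (S n) (fun k => x + INR k).

Definition ln_gauss (n : nat) (x : R) : R :=
  ln (INR (fact n)) + x * ln (INR n) - sumR (S n) (fun k => ln (x + INR k)).

Lemma gauss_seq_exp n x : (0 < n)%nat -> 0 < x -> gauss_seq n x = exp (ln_gauss n x).
Proof.
  intros Hn Hx.
  assert (Hk : forall k, 0 < x + INR k) by (intros k; pose proof (pos_INR k); lra).
  assert (Hprod : 0 < prodR (S n) (fun k => x + INR k)) by (apply prodR_pos; auto).
  assert (Hpow : 0 < Rpower (INR n) x) by apply exp_pos.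
  assert (Hg : 0 < gauss_seq n x)
    by (apply Rdiv_lt_0_compat; auto using Rmult_lt_0_compat, INR_fact_pos).
  rewrite <- (exp_ln _ Hg); f_equal.
  unfold gauss_seq, ln_gauss, Rdiv.
  rewrite ln_mult, ln_mult, ln_Rinv, ln_prodR, ln_Rpower;
    auto using Rmult_lt_0_compat, INR_fact_pos, Rinv_0_lt_compat.
Qed.

Lemma ln_gauss_increment_bounds n x : 0 < x ->
  0 <= ln_gauss (S (S n)) x - ln_gauss (S n) x <= (x + x * x) / ((INR n + 1) * (INR n + 1)).
Proof.
  intros Hx; set (m := INR n + 1).
  assert (Hm : 1 <= m) by (pose proof (pos_INR n); unfold m; lra).
  assert (increment : ln_gauss (S (S n)) x - ln_gauss (S n) x =
     x * (ln (m + 1) - ln m) - (ln (x + m + 1) - ln (m + 1))).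
  { unfold ln_gauss, m; rewrite (sumR_S (S (S n))).
    replace (fact (S (S n))) with (S (S n) * fact (S n))%nat by reflexivity.
    rewrite mult_INR, ln_mult by (apply lt_0_INR; lia || apply lt_O_fact).
    rewrite !S_INR.
    replace (x + (INR n + 1 + 1)) with (x + (INR n + 1) + 1) by ring.
    ring. }
  rewrite increment.
  destruct (ln_sub_bounds m (m + 1)) as [a1 a2]; try lra.
  destruct (ln_sub_bounds (m + 1) (x + m + 1)) as [b1 b2]; try lra.
  replace (1 - m / (m + 1)) with (1 / (m + 1)) in a1 by (field; lra).
  replace ((m + 1) / m - 1) with (1 / m) in a2 by (field; lra).
  replace (1 - (m + 1) / (x + m + 1)) with (x / (x + m + 1)) in b1 by (field; lra).
  replace ((x + m + 1) / (m + 1) - 1) with (x / (m + 1)) in b2 by (field; lra).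
  split.
  - assert (x * (1 / (m + 1)) <= x * (ln (m + 1) - ln m)) by (apply Rmult_le_compat_l; lra).
    replace (x * (1 / (m + 1))) with (x / (m + 1)) in * by (field; lra).
    lra.
  - assert (x * (ln (m + 1) - ln m) <= x * (1 / m)) by (apply Rmult_le_compat_l; lra).
    assert (x * (1 / m) - x / (x + m + 1) <= (x + x * x) / (m * m)).
    { replace (x * (1 / m) - x / (x + m + 1)) with ((x + x * x) / (m * (x + m + 1)))
        by (field; lra).
      apply Rmult_le_compat_l; [nra|]. apply Rinv_le_contravar; nra. }
    lra.
Qed.

(* Telescoping: (x + x^2)/(n+1)^2 <= 2(x + x^2)(1/(n+1) - 1/(n+2)). *)
Lemma ln_gauss_le x : 0 < x -> forall n,
  ln_gauss (S n) x <= ln_gauss 1 x + 2 * (x + x * x) - 2 * (x + x * x) / (INR n + 1).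
Proof.
  intros Hx n; set (C := x + x * x); assert (HC : 0 < C) by (unfold C; nra).
  induction n as [|n IH].
  - simpl; replace (0 + 1) with 1 by ring; unfold Rdiv; rewrite Rinv_1; lra.
  - destruct (ln_gauss_increment_bounds n x Hx) as [_ H]; fold C in H.
    rewrite S_INR; pose proof (pos_INR n).
    assert (C / ((INR n + 1) * (INR n + 1)) <= 2 * C / (INR n + 1) - 2 * C / (INR n + 1 + 1)).
    { replace (2 * C / (INR n + 1) - 2 * C / (INR n + 1 + 1)) with
        (C * / ((INR n + 1) * ((INR n + 2) / 2))) by (field; lra).
      apply Rmult_le_compat_l; [lra|]. apply Rinv_le_contravar; nra. }
    lra.
Qed.

Lemma ln_gauss_cvg x : 0 < x ->
  exists l : R, is_lim_seq (fun n => ln_gauss (S n) x) l /\ Gamma x = exp l.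
Proof.
  intros Hx.
  assert (growing : Un_growing (fun n => ln_gauss (S n) x)).
  { intros n; destruct (ln_gauss_increment_bounds n x Hx); lra. }
  assert (bounded : has_ub (fun n => ln_gauss (S n) x)).
  { exists (ln_gauss 1 x + 2 * (x + x * x)); intros y [n ->].
    pose proof (ln_gauss_le x Hx n); pose proof (pos_INR n).
    assert (0 <= 2 * (x + x * x) / (INR n + 1)) by (apply Rdiv_le_0_compat; nra).
    lra. }
  destruct (growing_cv _ growing bounded) as [l Hl].
  apply is_lim_seq_Reals in Hl.
  exists l; split; [exact Hl|].
  assert (Hgauss : is_lim_seq (fun n => gauss_seq n x) (exp l)).
  { apply is_lim_seq_incr_1.
    apply is_lim_seq_ext with (fun n => exp (ln_gauss (S n) x)).
    { intros n; rewrite gauss_seq_exp; auto; lia. }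
    apply is_lim_seq_continuous; [|exact Hl].
    apply derivable_continuous_pt, derivable_pt_exp. }
  change (Gamma x) with (real (Lim_seq (fun n => gauss_seq n x))).
  now rewrite (is_lim_seq_unique _ _ Hgauss).
Qed.

Lemma Gamma_pos x : 0 < x -> 0 < Gamma x.
Proof. intros Hx; destruct (ln_gauss_cvg x Hx) as [l [_ ->]]; apply exp_pos. Qed.

Lemma is_lim_seq_ln_gauss x : 0 < x ->
  is_lim_seq (fun n => ln_gauss (S n) x) (ln (Gamma x)).
Proof. intros Hx; destruct (ln_gauss_cvg x Hx) as [l [Hl ->]]; now rewrite ln_exp. Qed.

Lemma ln_gauss_convex n x y t : 0 < x -> 0 < y -> 0 <= t <= 1 ->
  ln_gauss n (t * x + (1 - t) * y) <= t * ln_gauss n x + (1 - t) * ln_gauss n y.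
Proof.
  intros Hx Hy Ht; unfold ln_gauss.
  assert (sumR (S n) (fun k => t * ln (x + INR k) + (1 - t) * ln (y + INR k)) <=
          sumR (S n) (fun k => ln (t * x + (1 - t) * y + INR k))).
  { apply sumR_le; intros k _; pose proof (pos_INR k).
    replace (t * x + (1 - t) * y + INR k) with (t * (x + INR k) + (1 - t) * (y + INR k)) by ring.
    apply ln_concave; lra. }
  rewrite sumR_convex_comb in H; nra.
Qed.

Lemma ln_Gamma_convex x y t : 0 < x -> 0 < y -> 0 <= t <= 1 ->
  ln (Gamma (t * x + (1 - t) * y)) <= t * ln (Gamma x) + (1 - t) * ln (Gamma y).
Proof.
  intros Hx Hy Ht.
  assert (Hcomb : is_lim_seq (fun n => t * ln_gauss (S n) x + (1 - t) * ln_gauss (S n) y)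
                   (t * ln (Gamma x) + (1 - t) * ln (Gamma y))).
  { apply is_lim_seq_plus'; apply (is_lim_seq_scal_l _ _ (Finite _));
      now apply is_lim_seq_ln_gauss. }
  apply (is_lim_seq_le _ _ _ _ (fun n => ln_gauss_convex (S n) x y t Hx Hy Ht)
           (is_lim_seq_ln_gauss _ (convex_comb_pos t x y Hx Hy Ht)) Hcomb).
Qed.

Lemma ln_gauss_add1 n x : 0 < x ->
  ln_gauss (S n) (x + 1) = ln_gauss (S n) x + ln x + (ln (INR n + 1) - ln (x + INR n + 2)).
Proof.
  intros Hx; unfold ln_gauss.
  rewrite (sumR_S (S n) (fun k => ln (x + 1 + INR k))),
    (sumR_shift (S n) (fun k => ln (x + INR k))),
    (sumR_ext (S n) (fun k => ln (x + 1 + INR k)) (fun k => ln (x + INR (S k))))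
    by (intros k _; rewrite S_INR; f_equal; ring).
  simpl (INR 0); rewrite !S_INR.
  replace (x + 0) with x by ring.
  replace (x + 1 + (INR n + 1)) with (x + INR n + 2) by ring.
  ring.
Qed.

Lemma is_lim_seq_inv_S : is_lim_seq (fun n => / INR (S n)) 0.
Proof.
  exact (proj1 (is_lim_seq_incr_1 _ _) (is_lim_seq_inv _ _ is_lim_seq_INR ltac:(discriminate))).
Qed.

Lemma is_lim_seq_ln_ratio x : 0 < x ->
  is_lim_seq (fun n => ln (INR n + 1) - ln (x + INR n + 2)) 0.
Proof.
  intros Hx.
  apply is_lim_seq_le_le with (fun n => - ((x + 1) * / INR (S n))) (fun n => 0).
  - intros n; pose proof (pos_INR n); rewrite S_INR.
    destruct (ln_sub_bounds (INR n + 1) (x + INR n + 2)) as [lower upper]; try lra.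
    replace ((x + INR n + 2) / (INR n + 1) - 1) with ((x + 1) * / (INR n + 1))
      in upper by (field; lra).
    assert (0 <= 1 - (INR n + 1) / (x + INR n + 2)).
    { replace (1 - (INR n + 1) / (x + INR n + 2)) with ((x + 1) / (x + INR n + 2))
        by (field; lra).
      apply Rdiv_le_0_compat; lra. }
    lra.
  - replace (Finite 0) with (Rbar_opp (Rbar_mult (x + 1) 0)) by (simpl; f_equal; ring).
    apply (proj1 (is_lim_seq_opp _ _)), is_lim_seq_scal_l, is_lim_seq_inv_S.
  - apply is_lim_seq_const.
Qed.

Lemma Gamma_add1 x : 0 < x -> Gamma (x + 1) = x * Gamma x.
Proof.
  intros Hx.
  assert (Hlim : is_lim_seq (fun n => ln_gauss (S n) (x + 1)) (ln (Gamma x) + ln x + 0)).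
  { apply is_lim_seq_ext with
      (fun n => ln_gauss (S n) x + ln x + (ln (INR n + 1) - ln (x + INR n + 2))).
    { intros n; now rewrite ln_gauss_add1. }
    apply is_lim_seq_plus'; [apply is_lim_seq_plus'|].
    - now apply is_lim_seq_ln_gauss.
    - apply is_lim_seq_const.
    - now apply is_lim_seq_ln_ratio. }
  pose proof (is_lim_seq_unique _ _ (is_lim_seq_ln_gauss (x + 1) ltac:(lra))) as H.
  rewrite (is_lim_seq_unique _ _ Hlim) in H; injection H as H.
  rewrite <- (exp_ln _ (Gamma_pos (x + 1) ltac:(lra))), <- H, Rplus_0_r, exp_plus,
    !exp_ln by (auto using Gamma_pos).
  ring.
Qed.

Lemma ex_series_Gamma_exp z w : 0 < z < 1 -> 0 < w ->
  ex_series (fun k => Gamma (w + INR k) * (z ^ k / INR (fact k))).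
Proof.
  intros Hz Hw; apply ex_series_Rabs.
  assert (Hpos : forall k, 0 < Gamma (w + INR k) * (z ^ k / INR (fact k))).
  { intros k; pose proof (pos_INR k); apply Rmult_lt_0_compat.
    - apply Gamma_pos; lra.
    - apply Rdiv_lt_0_compat; [apply pow_lt; lra | apply INR_fact_pos]. }
  apply (ex_series_DAlembert _ z); [lra | intros k; specialize (Hpos k); lra |].
  apply is_lim_seq_ext with (fun n => (1 + (w - 1) * / INR (S n)) * z).
  { intros n; pose proof (pos_INR n).
    rewrite Rabs_pos_eq by (apply Rdiv_le_0_compat; [apply Rlt_le|]; apply Hpos).
    rewrite S_INR at 2; replace (w + (INR n + 1)) with (w + INR n + 1) by ring.
    rewrite Gamma_add1 by lra.
    replace (fact (S n)) with (S n * fact n)%nat by reflexivity.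
    rewrite mult_INR; simpl (z ^ S n); rewrite S_INR.
    pose proof (Gamma_pos (w + INR n) ltac:(lra)); pose proof (INR_fact_pos n).
    pose proof (pow_lt z n ltac:(lra)).
    field; repeat split; lra. }
  pose proof (is_lim_seq_mult' _ _ _ _
    (is_lim_seq_plus' _ _ _ _ (is_lim_seq_const 1)
       (is_lim_seq_mult' _ _ _ _ (is_lim_seq_const (w - 1)) is_lim_seq_inv_S))
    (is_lim_seq_const z)) as Hlim.
  now replace ((1 + (w - 1) * 0) * z) with z in Hlim by ring.
Qed.

Lemma Series_pos a : (forall k, 0 < a k) -> ex_series a -> 0 < Series a.
Proof.
  intros Ha Hex; rewrite Series_incr_1 by assumption.
  apply Rplus_lt_le_0_compat; [apply Ha|].
  assert (Series_zero : Series (fun _ => 0) = 0).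
  { pose proof (Series_scal_l 0 (fun _ => 0)) as H0; now rewrite !Rmult_0_l in H0. }
  rewrite <- Series_zero.
  apply Series_le; [intros n; split; [apply Rle_refl | apply Rlt_le, Ha]|].
  now apply ex_series_incr_1 in Hex.
Qed.

(* Hölder's inequality for series, from the termwise weighted AM-GM inequality
   after normalising u and v by their sums. *)
Lemma ln_Series_le_convex_comb (u v w : nat -> R) t : 0 <= t <= 1 ->
  (forall k, 0 < u k) -> (forall k, 0 < v k) -> ex_series u -> ex_series v ->
  0 < Series w ->
  (forall k, 0 <= w k <= exp (t * ln (u k) + (1 - t) * ln (v k))) ->
  ln (Series w) <= t * ln (Series u) + (1 - t) * ln (Series v).
Proof.
  intros Ht Hu Hv Su Sv Hw Hwk.
  assert (HU : 0 < Series u) by now apply Series_pos.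
  assert (HV : 0 < Series v) by now apply Series_pos.
  set (E := exp (t * ln (Series u) + (1 - t) * ln (Series v))).
  rewrite <- (ln_exp (t * ln (Series u) + (1 - t) * ln (Series v))).
  apply ln_le; [exact Hw|]; fold E.
  apply Rle_trans with
    (Series (fun k => E * t / Series u * u k + E * (1 - t) / Series v * v k)).
  - apply Series_le.
    + intros k; split; [apply Hwk|].
      eapply Rle_trans; [apply Hwk|].
      eapply Rle_trans; [apply (geom_mean_le_scaled t (u k) (v k) (Series u) (Series v)); auto|].
      right; fold E; field; lra.
    + apply (ex_series_plus (V := R_NormedModule));
        now apply (ex_series_scal_l (V := R_NormedModule)).
  - rewrite Series_plus, !Series_scal_l
      by now apply (ex_series_scal_l (V := R_NormedModule)).
    right; field; lra.
Qed.

Lemma log_convex_on_midpoint_sq (I : R -> Prop) f x y :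
  log_convex_on I f -> I x -> I y -> I ((x + y) / 2) ->
  f ((x + y) / 2) ^ 2 <= f x * f y.
Proof.
  intros [Hpos Hconv] Hx Hy Hm.
  specialize (Hconv x y (1 / 2) Hx Hy ltac:(lra)).
  replace (1 / 2 * x + (1 - 1 / 2) * y) with ((x + y) / 2) in Hconv by field.
  assert (Hxy : 0 < f x * f y) by (apply Rmult_lt_0_compat; auto).
  rewrite <- (exp_ln (f ((x + y) / 2) ^ 2)), <- (exp_ln (f x * f y)) by (auto using pow_lt).
  apply exp_le_exp.
  rewrite ln_pow, ln_mult by auto; simpl INR; lra.
Qed.

Section GammaSeries.

Variables (c : nat -> R) (z M : R).
Hypothesis z_range : 0 < z < 1.
Hypothesis c_bounds : forall k, 0 < c k <= M * (z ^ k / INR (fact k)).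

Definition gamma_series (w : R) : R := Series (fun k => c k * Gamma (w + INR k)).

Lemma gamma_term_pos w k : 0 < w -> 0 < c k * Gamma (w + INR k).
Proof.
  intros Hw; pose proof (pos_INR k).
  apply Rmult_lt_0_compat; [apply c_bounds | apply Gamma_pos; lra].
Qed.

Lemma ex_series_gamma_series w : 0 < w -> ex_series (fun k => c k * Gamma (w + INR k)).
Proof.
  intros Hw.
  apply (ex_series_le (V := R_CompleteNormedModule) _
           (fun k => M * (Gamma (w + INR k) * (z ^ k / INR (fact k))))).
  - intros n; change norm with Rabs; simpl.
    pose proof (gamma_term_pos w n Hw).
    rewrite Rabs_pos_eq by lra.
    destruct (c_bounds n); pose proof (Gamma_pos (w + INR n)); pose proof (pos_INR n).
    replace (M * (Gamma (w + INR n) * (z ^ n / INR (fact n))))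
      with (M * (z ^ n / INR (fact n)) * Gamma (w + INR n)) by ring.
    apply Rmult_le_compat_r; [apply Rlt_le, Gamma_pos; lra | lra].
  - apply (ex_series_scal_l (V := R_NormedModule)), ex_series_Gamma_exp; assumption.
Qed.

Lemma gamma_series_pos w : 0 < w -> 0 < gamma_series w.
Proof.
  intros Hw; apply Series_pos; [intros k; now apply gamma_term_pos|].
  now apply ex_series_gamma_series.
Qed.

Lemma gamma_series_log_convex : log_convex_on (fun s => 0 < s) gamma_series.
Proof.
  split; [exact gamma_series_pos|].
  intros x y t Hx Hy Ht.
  pose proof (convex_comb_pos t x y Hx Hy Ht) as Hm.
  apply ln_Series_le_convex_comb;
    [exact Ht | intros k; now apply gamma_term_pos | intros k; now apply gamma_term_pos
    | now apply ex_series_gamma_series | now apply ex_series_gamma_series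
    | now apply gamma_series_pos |].
  intros k; pose proof (pos_INR k).
  split; [now apply Rlt_le, gamma_term_pos|].
  assert (Hc : 0 < c k) by apply c_bounds.
  assert (Gx : 0 < Gamma (x + INR k)) by (apply Gamma_pos; lra).
  assert (Gy : 0 < Gamma (y + INR k)) by (apply Gamma_pos; lra).
  rewrite !ln_mult by assumption.
  replace (t * (ln (c k) + ln (Gamma (x + INR k))) + (1 - t) * (ln (c k) + ln (Gamma (y + INR k))))
    with (ln (c k) + (t * ln (Gamma (x + INR k)) + (1 - t) * ln (Gamma (y + INR k)))) by ring.
  rewrite exp_plus, exp_ln by assumption.
  apply Rmult_le_compat_l; [lra|].
  rewrite <- (exp_ln (Gamma (t * x + (1 - t) * y + INR k))) by (apply Gamma_pos; lra).
  apply exp_le_exp.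
  replace (t * x + (1 - t) * y + INR k) with (t * (x + INR k) + (1 - t) * (y + INR k)) by ring.
  apply ln_Gamma_convex; lra.
Qed.

End GammaSeries.

Lemma eventually_pos_affine n (a C : nat -> R) : (forall i, (i < n)%nat -> 0 < C i) ->
  exists K, forall k, (K <= k)%nat -> forall i, (i < n)%nat -> 0 < a i + INR k * C i.
Proof.
  induction n as [|n IH]; intros HC; [exists 0%nat; intros; lia|].
  destruct IH as [K1 HK1]; [intros; apply HC; lia|].
  destruct (proj2 (is_lim_seq_spec _ _) is_lim_seq_INR (- a n / C n)) as [K2 HK2].
  exists (Nat.max K1 K2); intros k Hk i Hi.
  destruct (Nat.eq_dec i n) as [->|Hne]; [|apply HK1; lia].
  specialize (HK2 k ltac:(lia)); pose proof (HC n ltac:(lia)).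
  assert (- a n / C n * C n < INR k * C n) by (apply Rmult_lt_compat_r; auto).
  replace (- a n / C n * C n) with (- a n) in * by (field; lra).
  lra.
Qed.

Definition fw_coef (p q : nat) (alpha A beta B : nat -> R) (k : nat) : R :=
  prodR p (fun i => Gamma (alpha i + INR k * A i))
  / prodR q (fun j => Gamma (beta j + INR k * B j)).

Lemma fw_coef_eventually_pos p q alpha A beta B :
  (forall i, (i < p)%nat -> 0 < A i) -> (forall j, (j < q)%nat -> 0 < B j) ->
  exists K, forall k, (K <= k)%nat -> 0 < fw_coef p q alpha A beta B k.
Proof.
  intros HA HB.
  destruct (eventually_pos_affine p alpha A HA) as [K1 HK1].
  destruct (eventually_pos_affine q beta B HB) as [K2 HK2].
  exists (Nat.max K1 K2); intros k Hk.
  apply Rdiv_lt_0_compat; apply prodR_pos; intros i Hi; apply Gamma_pos.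
  - apply HK1; auto; lia.
  - apply HK2; auto; lia.
Qed.

(* If f k <= 0 < f (k+2), then f (k+1)^2 < f k * f (k+2) <= 0 is impossible. *)
Lemma pos_of_eventually_pos (f : nat -> R) :
  (forall n, f (S n) ^ 2 < f n * f (S (S n))) ->
  (exists K, forall k, (K <= k)%nat -> 0 < f k) -> forall k, 0 < f k.
Proof.
  intros Hturan [K HK].
  assert (down : forall k, 0 < f (S (S k)) -> 0 < f k).
  { intros k Hk; destruct (Rlt_or_le 0 (f k)) as [|Hle]; [assumption|].
    pose proof (Hturan k); pose proof (pow2_ge_0 (f (S k))); nra. }
  assert (down_even : forall j k, 0 < f (k + 2 * j)%nat -> 0 < f k).
  { induction j as [|j IH]; intros k Hk.
    - now rewrite Nat.mul_0_r, Nat.add_0_r in Hk.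
    - apply down, IH; now replace (S (S k) + 2 * j)%nat with (k + 2 * S j)%nat by lia. }
  intros k; apply (down_even K k), HK; lia.
Qed.

Lemma le_Rmax_of_decreasing_tail (f : nat -> R) :
  (forall n, f (S (S n)) < f (S n)) -> forall k, f k <= Rmax (f 0%nat) (f 1%nat).
Proof.
  intros Hdec.
  assert (tail : forall n, f (S n) <= f 1%nat).
  { induction n as [|n IH]; [apply Rle_refl|]; pose proof (Hdec n); lra. }
  intros [|k]; [apply Rmax_l | eapply Rle_trans; [apply tail | apply Rmax_r]].
Qed.

Lemma FoxWright_gamma_series p q alpha A beta B z :
  (fun sigma => FoxWright (S p) q (shift_param sigma alpha) (shift_param 1 A) beta B z)
  = gamma_series (fun k => fw_coef p q alpha A beta B k * (z ^ k / INR (fact k))).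
Proof.
  apply functional_extensionality; intros sigma.
  unfold FoxWright, gamma_series, fw_coef; apply Series_ext; intros k.
  rewrite prodR_shift; simpl shift_param.
  rewrite Rmult_1_r; unfold Rdiv; ring.
Qed.

Theorem theorem5 (p q : nat) (alpha A : nat -> R) (beta B : nat -> R)
  (hA : forall i, (i < p)%nat -> 0 < A i)
  (hB : forall j, (j < q)%nat -> 0 < B j)
  (hcond : sumR q beta - sumR p alpha + (INR p - INR q) / 2 > 0)
  (hsum : sumR p A = sumR q B)
  (psi : nat -> nat -> R)
  (hpsi : forall n m, psi n m =
      prodR p (fun i => Gamma (alpha i + (INR n + INR m) * A i))
      / prodR q (fun j => Gamma (beta j + (INR n + INR m) * B j)))
  (h1 : forall n, psi n 2%nat < psi n 1%nat)
  (h2 : forall n, (psi n 1%nat) ^ 2 < psi n 0%nat * psi n 2%nat) :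
  let Xi := fun (z sigma : R) =>
    FoxWright (S p) q (shift_param sigma alpha) (shift_param 1 A) beta B z in
  (forall z, 0 < z < 1 -> log_convex_on (fun s => 0 < s) (Xi z)) /\
  (forall z sigma, 0 < z < 1 -> 0 < sigma ->
     Xi z sigma * Xi z (sigma + 2) - (Xi z (sigma + 1)) ^ 2 >= 0).
Proof.
  intros Xi.
  set (f := fw_coef p q alpha A beta B).
  assert (psi_f : forall n m, psi n m = f (n + m)%nat)
    by (intros n m; rewrite hpsi; unfold f, fw_coef; now rewrite plus_INR).
  assert (f_decr : forall n, f (S (S n)) < f (S n)).
  { intros n; generalize (h1 n); now rewrite !psi_f, !Nat.add_succ_r, Nat.add_0_r. }
  assert (f_turan : forall n, f (S n) ^ 2 < f n * f (S (S n))).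
  { intros n; generalize (h2 n); now rewrite !psi_f, !Nat.add_succ_r, !Nat.add_0_r. }
  assert (f_pos : forall k, 0 < f k)
    by (apply pos_of_eventually_pos; [exact f_turan | now apply fw_coef_eventually_pos]).
  assert (c_bounds : forall z, 0 < z < 1 -> forall k,
    0 < f k * (z ^ k / INR (fact k)) <= Rmax (f 0%nat) (f 1%nat) * (z ^ k / INR (fact k))).
  { intros z Hz k.
    assert (0 < z ^ k / INR (fact k))
      by (apply Rdiv_lt_0_compat; [apply pow_lt; lra | apply INR_fact_pos]).
    split; [now apply Rmult_lt_0_compat|].
    apply Rmult_le_compat_r; [lra | now apply le_Rmax_of_decreasing_tail]. }
  assert (Xi_log_convex : forall z, 0 < z < 1 -> log_convex_on (fun s => 0 < s) (Xi z)).
  { intros z Hz; unfold Xi; rewrite FoxWright_gamma_series.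
    exact (gamma_series_log_convex _ z _ Hz (c_bounds z Hz)). }
  split; [exact Xi_log_convex|].
  intros z sigma Hz Hs.
  replace (sigma + 1) with ((sigma + (sigma + 2)) / 2) by field.
  apply Rge_minus, Rle_ge, (log_convex_on_midpoint_sq (fun s => 0 < s));
    [now apply Xi_log_convex | lra ..].
Qed.
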